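(* Let $X,Y$ be metric spaces, $X\times Y$ with the maximum metric, $E\subseteq X\times Y$, and let $A\subseteq X$ be a set such that $E_x=\{y\in Y:(x,y)\in E\}\ne\emptyset$ for all $x\in A$. Then (i) $\dim_{\mathrm P}E\ge\dim_{\mathrm P}A+\inf_{x\in A}\vec{\dim}_{\mathrm P}E_x$; (ii) $\underline{\dim}_{\mathrm P}E\ge\underline{\dim}_{\mathrm P}A+\inf_{x\in A}\underline{\dim}_{\mathrm P}E_x$; (iii) $\vec{\dim}_{\mathrm P}E\ge\vec{\dim}_{\mathrm P}A+\inf_{x\in A}\vec{\dim}_{\mathrm P}E_x$.
   Context: For a subset $E$ of a metric space, $N_\delta(E)$ is the minimal cardinality of a cover of $E$ by sets of diameter at most $\delta$. $\underline{\dim}_{\mathrm B}E=\liminf_{\delta\to0}\frac{\log N_\delta(E)}{|\log\delta|}$, $\overline{\dim}_{\mathrm B}E=\limsup_{\delta\to0}\frac{\log N_\delta(E)}{|\log\delta|}$. $\dim_{\mathrm P}E=\inf\{\sup_n\overline{\dim}_{\mathrm B}E_n:E\subseteq\bigcup_nE_n\}$, $\underline{\dim}_{\mathrm P}E=\inf\{\sup_n\underline{\dim}_{\mathrm B}E_n:E\subseteq\bigcup_nE_n\}$ (countable covers), and $\vec{\dim}_{\mathrm P}E=\inf\{\sup_n\underline{\dim}_{\mathrm B}E_n:E_n\uparrow E\}$, where $E_n\uparrow E$ means $(E_n)$ is an increasing sequence of sets with union $E$. *)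

From HB Require Import structures.
From mathcomp Require Import all_boot all_order all_algebra.
From mathcomp Require Import all_classical all_reals all_analysis.
Set Implicit Arguments. Unset Strict Implicit. Unset Printing Implicit Defensive.
Import Order.TTheory GRing.Theory Num.Theory.
Local Open Scope classical_set_scope.
Local Open Scope ring_scope.

Record metric (R : realType) (T : Type) := Metric {
  mdist :> T -> T -> R;
  mdist_eq0 : forall x y, mdist x y = 0 <-> x = y;
  mdist_sym : forall x y, mdist x y = mdist y x;
  mdist_tri : forall x y z, mdist x z <= mdist x y + mdist y z }.

Section Defs.
Variable R : realType.

Definition prod_dist (X Y : Type) (dX : metric R X) (dY : metric R Y)
  (p q : X * Y) : R := Num.max (dX p.1 q.1) (dY p.2 q.2).

Lemma prod_dist_eq0 X Y (dX : metric R X) (dY : metric R Y) p q :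
  prod_dist dX dY p q = 0 <-> p = q.
Proof.
have h0 : forall T (d : metric R T) x y, 0 <= d x y.
  move=> T d x y; have := mdist_tri d x y x; rewrite (mdist_sym d y x).
  rewrite ((mdist_eq0 d x x).2 erefl) -mulr2n => h.
  by rewrite -(pmulrn_lge0 _ (isT : (0 < 2)%N)) h.
case: p q => [x1 y1] [x2 y2]; rewrite /prod_dist /=; split; last first.
  by case=> -> ->; rewrite !(mdist_eq0 _ _ _).2 // maxxx.
move=> /eqP; rewrite eq_le ge_max => /andP[/andP[a b] _].
have ha : dX x1 x2 = 0 by apply/eqP; rewrite eq_le a h0.
have hb : dY y1 y2 = 0 by apply/eqP; rewrite eq_le b h0.
by rewrite ((mdist_eq0 _ _ _).1 ha) ((mdist_eq0 _ _ _).1 hb).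
Qed.

Lemma prod_dist_sym X Y (dX : metric R X) (dY : metric R Y) p q :
  prod_dist dX dY p q = prod_dist dX dY q p.
Proof. by rewrite /prod_dist mdist_sym [dY _ _]mdist_sym. Qed.

Lemma prod_dist_tri X Y (dX : metric R X) (dY : metric R Y) p q r :
  prod_dist dX dY p r <= prod_dist dX dY p q + prod_dist dX dY q r.
Proof.
rewrite /prod_dist ge_max; apply/andP; split.
- apply: le_trans (mdist_tri dX p.1 q.1 r.1) _.
  by apply: lerD; rewrite le_max lexx.
- apply: le_trans (mdist_tri dY p.2 q.2 r.2) _.
  by apply: lerD; rewrite le_max lexx ?orbT.
Qed.

Definition prod_metric X Y (dX : metric R X) (dY : metric R Y) : metric R (X * Y) :=
  Metric (@prod_dist_eq0 X Y dX dY) (@prod_dist_sym X Y dX dY)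
         (@prod_dist_tri X Y dX dY).

Local Open Scope ereal_scope.

(* diameter of a set (sup of distances; -oo for the empty set) *)
Definition diam T (d : metric R T) (F : set T) : \bar R :=
  ereal_sup [set (d p.1 p.2)%:E | p in F `*` F].

(* N_delta(E): minimal cardinality of a cover of E by sets of diameter at most
   delta; +oo if there is no finite such cover *)
Definition Ncov T (d : metric R T) (delta : R) (E : set T) : \bar R :=
  ereal_inf [set (n%:R)%:E | n in [set n : nat | exists F : nat -> set T,
     (forall i, (i < n)%N -> diam d (F i) <= delta%:E) /\
     E `<=` \bigcup_(i in [set i : nat | (i < n)%N]) F i]].

Definition elog (x : \bar R) : \bar R :=
  match x with
  | r%:E => if r == 0%R then -oo else (ln r)%:E
  | +oo => +oo
  | -oo => -oo
  end.

Definition box_ratio T (d : metric R T) (E : set T) (delta : R) : \bar R :=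
  elog (Ncov d delta E) * ((`|ln delta|)^-1)%:E.

Definition lowbox T (d : metric R T) (E : set T) : \bar R :=
  ereal_sup [set ereal_inf [set box_ratio d E delta | delta in
                              [set delta : R | (0 < delta < eps)%R]]
            | eps in [set eps : R | (0 < eps)%R]].

Definition upbox T (d : metric R T) (E : set T) : \bar R :=
  ereal_inf [set ereal_sup [set box_ratio d E delta | delta in
                              [set delta : R | (0 < delta < eps)%R]]
            | eps in [set eps : R | (0 < eps)%R]].

Definition dimP T (d : metric R T) (E : set T) : \bar R :=
  ereal_inf [set ereal_sup (range (fun n => upbox d (F n)))
            | F in [set F : nat -> set T | E `<=` \bigcup_n F n]].

Definition ldimP T (d : metric R T) (E : set T) : \bar R :=
  ereal_inf [set ereal_sup (range (fun n => lowbox d (F n)))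
            | F in [set F : nat -> set T | E `<=` \bigcup_n F n]].

Definition vdimP T (d : metric R T) (E : set T) : \bar R :=
  ereal_inf [set ereal_sup (range (fun n => lowbox d (F n)))
            | F in [set F : nat -> set T |
                     (forall n, F n `<=` F n.+1) /\ \bigcup_n F n = E]].

Definition section X Y (E : set (X * Y)) (x : X) : set Y := [set y | E (x, y)].

End Defs.

(* The heart of the matter is a counting estimate at a fixed scale: if every
   fibre of G over B needs at least m sets of diameter delta to be covered, then
   N_delta(G) >= m N_{2 delta}(B), because a delta-ball in X swallows the base
   points it contains and the cover elements meeting one fibre number at least m.
   Taking logarithms turns this into box-dimension bounds (the change of scale
   from 2 delta to delta costs nothing in the limit). For the packing dimensions
   one splits A into the countably many sets of points whose fibres are already
   thick below scale 1/(k+1) and applies the box-dimension bound to each. *)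

From mathcomp Require Import all_boot all_order all_algebra.
From mathcomp Require Import all_classical all_reals all_analysis.
From mathcomp Require Import lra ring.
Import Order.TTheory GRing.Theory Num.Theory.
Local Open Scope classical_set_scope.
Local Open Scope ereal_scope.
Set Implicit Arguments. Unset Strict Implicit.

Section ExtendedReals.
Variable R : realType.
Implicit Types (a b c : \bar R) (r s t : R).

Lemma ereal_gt_real_between r c : r%:E < c -> exists s, (r < s)%R /\ s%:E < c.
Proof.
case: c => [u| |] //=; last by exists (r + 1)%R; split; [lra | rewrite ltry].
by rewrite lte_fin => ru; exists ((r + u) / 2)%R; rewrite lte_fin; split; lra.
Qed.

Lemma ereal_lt_real_between c r : c < r%:E -> exists s, c < s%:E /\ (s < r)%R.
Proof.
case: c => [u| |] //=; last by exists (r - 1)%R; split; [rewrite ltNyr | lra].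
by rewrite lte_fin => ur; exists ((u + r) / 2)%R; rewrite lte_fin; split; lra.
Qed.

Lemma lee_real_ubounds a c : (forall r, c < r%:E -> a <= r%:E) -> a <= c.
Proof.
case: c => [u| |] h; rewrite ?leey //.
- by apply/lee_addgt0Pr => e e0; apply: h; rewrite lte_fin ltrDl.
- by rewrite leeNy_eq; apply/eqP/eq_ninfty => r; apply: h; rewrite ltNyr.
Qed.

Lemma leeD_real_lbounds a b c :
  (forall s t, s%:E < a -> t%:E < b -> (s + t)%:E <= c) -> a + b <= c.
Proof.
case: a => [u| |] h; last by rewrite leNye.
- case: b h => [v| |] h; last by rewrite addeNy leNye.
  + apply/lee_subgt0Pr => e e0; rewrite -EFinD.
    have -> : (u + v - e = (u - e / 2) + (v - e / 2))%R by field.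
    by apply: h; rewrite lte_fin; lra.
  + rewrite (eq_infty (x := c)) ?leey // => r.
    have -> : r = (u - 1 + (r - u + 1))%R by ring.
    by apply: h; rewrite ?ltry // lte_fin; lra.
- case: b h => [v| |] h; rewrite ?leNye //.
  + rewrite (eq_infty (x := c)) ?leey // => r.
    have -> : r = (r - v + 1 + (v - 1))%R by ring.
    by apply: h; rewrite ?ltry // lte_fin; lra.
  + rewrite (eq_infty (x := c)) ?leey // => r.
    by have := h r 0%R; rewrite addr0 !ltry; apply.
Qed.

End ExtendedReals.

Section CoveringNumber.
Variables (R : realType) (T : Type) (d : metric R T).
Implicit Types (S : set T) (delta : R).

Lemma diam_le S r : (forall a b, S a -> S b -> d a b <= r)%R -> diam d S <= r%:E.
Proof. by move=> h; apply/ereal_supP => _ [[a b] [/= Sa Sb] <-]; rewrite lee_fin h. Qed.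

Lemma dist_le_diam S r a b : diam d S <= r%:E -> S a -> S b -> (d a b <= r)%R.
Proof.
move=> h Sa Sb; rewrite -lee_fin; apply: le_trans h.
by apply: ereal_sup_ubound; exists (a, b).
Qed.

Lemma Ncov_le_cover delta S n (F : nat -> set T) :
  (forall i, (i < n)%N -> diam d (F i) <= delta%:E) ->
  S `<=` \bigcup_(i in [set i : nat | (i < n)%N]) F i ->
  Ncov d delta S <= n%:R%:E.
Proof. by move=> h1 h2; apply: ereal_inf_lbound; exists n => //; exists F. Qed.

Lemma Ncov_le_seq delta S (s : seq nat) (F : nat -> set T) :
  (forall i, i \in s -> diam d (F i) <= delta%:E) ->
  (forall x, S x -> exists2 i, i \in s & F i x) ->
  Ncov d delta S <= (size s)%:R%:E.
Proof.
move=> h1 h2; apply: (@Ncov_le_cover _ _ _ (fun k => F (nth 0%N s k))).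
  by move=> i hi; apply: h1; rewrite mem_nth.
move=> x /h2 [i iis Fix]; exists (index i s); first by rewrite /= index_mem.
by rewrite nth_index.
Qed.

Lemma Ncov_ge0 delta S : 0 <= Ncov d delta S.
Proof. by apply/ereal_infP => _ [n _ <-]; rewrite lee_fin ler0n. Qed.

Lemma le_Ncov delta S S' : S `<=` S' -> Ncov d delta S <= Ncov d delta S'.
Proof.
move=> SS'; apply/ereal_infP => _ [n [F [h1 h2]] <-].
exact: (Ncov_le_cover h1 (subset_trans SS' h2)).
Qed.

Lemma Ncov_set0 delta : Ncov d delta set0 = 0.
Proof.
apply/eqP; rewrite eq_le Ncov_ge0 andbT.
exact: (@Ncov_le_cover _ _ 0%N (fun _ => set0)).
Qed.

Lemma Ncov_infty_or_min_cover delta S : Ncov d delta S = +oo \/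
  exists n (F : nat -> set T),
    [/\ forall i, (i < n)%N -> diam d (F i) <= delta%:E,
        S `<=` \bigcup_(i in [set i : nat | (i < n)%N]) F i &
        Ncov d delta S = n%:R%:E].
Proof.
pose P n := exists F : nat -> set T,
  (forall i, (i < n)%N -> diam d (F i) <= delta%:E) /\
  S `<=` \bigcup_(i in [set i : nat | (i < n)%N]) F i.
have [[n Pn]|nP] := pselect (exists n, P n); last first.
  left; apply/eqP; rewrite eq_le leey /=.
  by apply/ereal_infP => y [n Pn _]; exfalso; apply: nP; exists n.
right; have exP : exists n, `[< P n >] by exists n; apply/asboolP.
case: (ex_minnP exP) => n0 /asboolP [F [h1 h2]] n0_min.
exists n0, F; split => //; apply/eqP; rewrite eq_le (Ncov_le_cover h1 h2) /=.
apply/ereal_infP => _ [k Pk <-]; rewrite lee_fin ler_nat.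
by apply: n0_min; apply/asboolP.
Qed.

Lemma Ncov_setU delta S1 S2 :
  Ncov d delta (S1 `|` S2) <= Ncov d delta S1 + Ncov d delta S2.
Proof.
have [->|[n1 [F1 [h1 c1 ->]]]] := Ncov_infty_or_min_cover delta S1.
  by rewrite addye ?leey // gt_eqF // (lt_le_trans _ (Ncov_ge0 _ _)) ?ltNy0.
have [->|[n2 [F2 [h2 c2 ->]]]] := Ncov_infty_or_min_cover delta S2.
  by rewrite addey ?leey.
rewrite -EFinD -natrD.
pose F i := if (i < n1)%N then F1 i else F2 (i - n1)%N.
apply: (@Ncov_le_cover _ _ _ F) => [i hi|x [/c1 [i /= hi F1i]|/c2 [i /= hi F2i]]].
- rewrite /F; case: ifPn => [/h1//|]; rewrite -leqNgt => n1i.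
  by apply: h2; rewrite ltn_subLR.
- by exists i; rewrite /= ?ltn_addr // /F hi.
- by exists (n1 + i)%N; rewrite /= ?ltn_add2l // /F ltnNge leq_addr /= addKn.
Qed.

Lemma Ncov_ball_le1 delta x0 :
  Ncov d (2 * delta) [set x | d x0 x <= delta]%R <= 1.
Proof.
apply: (@Ncov_le_cover _ _ 1%N (fun _ => [set x | d x0 x <= delta]%R)); last first.
  by move=> x hx; exists 0%N.
move=> _ _; apply: diam_le => a b ha hb; apply: le_trans (mdist_tri d a x0 b) _.
by rewrite mdist_sym; apply: le_trans (lerD ha hb) _; lra.
Qed.

End CoveringNumber.

Section FiberCount.
Variables (R : realType) (X Y : Type) (dX : metric R X) (dY : metric R Y).
Let P := prod_metric dX dY.

Lemma prod_dist_fst (p q : X * Y) : (dX p.1 q.1 <= P p q)%R.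
Proof. by rewrite /= /prod_dist le_max lexx. Qed.

Lemma prod_dist_snd (p q : X * Y) : (dY p.2 q.2 <= P p q)%R.
Proof. by rewrite /= /prod_dist le_max lexx orbT. Qed.

Variables (G : set (X * Y)) (B : set X) (delta m : R).
Hypothesis m_gt0 : (0 < m)%R.
Hypothesis fiber_large : forall x, B x -> m%:E <= Ncov dY delta (section G x).

Let meets (U : set (X * Y)) x := `[< exists y, U (x, y) >].

Lemma fiber_cover_size (s : seq nat) (U : nat -> set (X * Y)) x :
  B x -> (forall i, i \in s -> diam P (U i) <= delta%:E) ->
  (forall y, G (x, y) -> exists2 i, i \in s & U i (x, y)) ->
  (m <= (size [seq i <- s | meets (U i) x])%:R)%R.
Proof.
move=> Bx hU hcov; rewrite -lee_fin; apply: le_trans (fiber_large Bx) _.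
apply: (@Ncov_le_seq _ _ _ _ _ _ (fun i => [set y | U i (x, y)])).
  move=> i; rewrite mem_filter => /andP[_ ins]; apply: diam_le => a b Ua Ub.
  exact: le_trans (prod_dist_snd (x, a) (x, b)) (dist_le_diam (hU _ ins) Ua Ub).
move=> y Gy; have [i ins Ui] := hcov y Gy.
by exists i => //; rewrite mem_filter ins andbT; apply/asboolP; exists y.
Qed.

Lemma Ncov_fiber_count n (s : seq nat) (U : nat -> set (X * Y)) (B' : set X) :
  (size s <= n)%N -> B' `<=` B ->
  (forall i, i \in s -> diam P (U i) <= delta%:E) ->
  (forall p, G p -> B' p.1 -> exists2 i, i \in s & U i p) ->
  Ncov dX (2 * delta) B' * m%:E <= (size s)%:R%:E.
Proof.
(* Peel off the [delta]-ball around a point [x0] of [B']: at least [m] of the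
   cover elements meet the fibre over [x0], and those that do not still cover
   the part of [G] over points of [B'] farther than [delta] from [x0]. *)
elim: n s B' => [|n IHn] s B' sn B'B hU hcov;
  have [->|/set0P[x0 B'x0]] := eqVneq B' set0;
  rewrite ?Ncov_set0 ?mul0e ?lee_fin ?ler0n //.
  have := fiber_cover_size (B'B _ B'x0) hU (fun y Gy => hcov _ Gy B'x0).
  by move: sn; rewrite leqn0 => /nilP ->; rewrite /= leNgt m_gt0.
set s1 := [seq i <- s | meets (U i) x0].
set s2 := [seq i <- s | ~~ meets (U i) x0].
set far := [set x | B' x /\ (delta < dX x0 x)%R].
have size_s : size s = (size s1 + size s2)%N by rewrite !size_filter count_predC.
have ms1 : (m <= (size s1)%:R)%R.
  by apply: (fiber_cover_size (B'B _ B'x0) hU) => y Gy; apply: hcov.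
have s1_gt0 : (0 < size s1)%N by rewrite -(ltr_nat R); apply: lt_le_trans ms1.
have far_count : Ncov dX (2 * delta) far * m%:E <= (size s2)%:R%:E.
  apply: IHn => [|x [/B'B//]|i|p Gp [B'p dp]].
  - by rewrite -ltnS (leq_trans _ sn) // size_s -[X in (X < _)%N]add0n ltn_add2r.
  - by rewrite mem_filter => /andP[_]; apply: hU.
  have [i ins Ui] := hcov p Gp B'p; exists i => //.
  rewrite mem_filter ins andbT; apply/negP => /asboolP [y Uy].
  have := le_trans (prod_dist_fst (x0, y) p) (dist_le_diam (hU _ ins) Uy Ui).
  by rewrite leNgt dp.
have B'_split : B' `<=` [set x | dX x0 x <= delta]%R `|` far.
  by move=> x B'x; have [|] := leP (dX x0 x) delta; [left | right].
have B'_cover := le_trans (le_Ncov dX (2 * delta) B'_split) (Ncov_setU _ _ _ _).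
apply: le_trans (lee_wpmul2r _ B'_cover) _; first by rewrite lee_fin ltW.

rewrite ge0_muleDl ?Ncov_ge0 // size_s natrD EFinD.
apply: leeD => //; apply: le_trans (lee_wpmul2r _ (Ncov_ball_le1 dX delta x0)) _.
  by rewrite lee_fin ltW.
by rewrite mul1e lee_fin.
Qed.


Lemma Ncov_fiber_bound : Ncov dX (2 * delta) B * m%:E <= Ncov P delta G.
Proof.
apply/ereal_infP => _ [n [F [hF cF]] <-].
rewrite -(size_iota 0 n).
apply: (@Ncov_fiber_count _ _ F _ (eq_leq (size_iota 0 n)) (@subset_refl _ B)).
  by move=> i; rewrite mem_iota add0n => /hF.
by move=> p Gp _; have [i ilt Fi] := cF p Gp; exists i; rewrite ?mem_iota.
Qed.

End FiberCount.

Section BoxDimension.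
Variables (R : realType) (T : Type) (d : metric R T).
Implicit Types (S : set T) (r delta eps : R).

Lemma box_ratio_ge S delta r : (0 < delta < 1)%R ->
  (r%:E <= box_ratio d S delta) = ((expR (r * - ln delta))%:E <= Ncov d delta S).
Proof.
move=> delta01; have L0 : (0 < - ln delta)%R by rewrite oppr_gt0 ln_lt0.
rewrite /box_ratio ltr0_norm -?oppr_gt0 // lee_pdivlMr // -EFinM.
case: (Ncov d delta S) (Ncov_ge0 d delta S) => [N| |] //= N0; last by rewrite !leey.
rewrite lee_fin in N0; have [->|N_neq0] := eqVneq N 0%R.
  by rewrite leNgt ltNye /= lee_fin leNgt expR_gt0.
have N_gt0 : (0 < N)%R by rewrite lt_def N_neq0 N0.
by rewrite !lee_fin -{2}(lnK N_gt0) ler_expR.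
Qed.

Lemma box_ratio_lt S delta r : (0 < delta < 1)%R ->
  (box_ratio d S delta < r%:E) = (Ncov d delta S < (expR (r * - ln delta))%:E).
Proof. by move=> delta01; rewrite !ltNge box_ratio_ge. Qed.

Lemma lowbox_gtP S r : r%:E < lowbox d S ->
  exists2 eps, (0 < eps)%R &
    forall delta, (0 < delta < eps)%R -> r%:E < box_ratio d S delta.
Proof.
move/ereal_sup_gt => [_ [eps /= eps_gt0 <-] hr]; exists eps => // delta hdelta.
by apply: lt_le_trans hr _; apply: ereal_inf_lbound; exists delta.
Qed.

Lemma lowbox_ge S r eps : (0 < eps)%R ->
  (forall delta, (0 < delta < eps)%R -> r%:E <= box_ratio d S delta) ->
  r%:E <= lowbox d S.
Proof.
move=> eps_gt0 h; apply: le_trans (ereal_sup_ubound _); last by exists eps.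
by apply/ereal_infP => _ [delta hdelta <-]; apply: h.
Qed.

Lemma upbox_gtP S r : r%:E < upbox d S ->
  forall eps, (0 < eps)%R ->
    exists delta, (0 < delta < eps)%R /\ r%:E < box_ratio d S delta.
Proof.
move=> hr eps eps_gt0.
have : r%:E < ereal_sup [set box_ratio d S delta | delta in
                          [set delta : R | (0 < delta < eps)%R]].
  by apply: lt_le_trans hr _; apply: ereal_inf_lbound; exists eps.
by move/ereal_sup_gt => [_ [delta hdelta <-] h]; exists delta.
Qed.

Lemma upbox_ge S r :
  (forall eps, (0 < eps)%R ->
    exists delta, (0 < delta < eps)%R /\ r%:E <= box_ratio d S delta) ->
  r%:E <= upbox d S.
Proof.
move=> h; apply/ereal_infP => _ [eps eps_gt0 <-].
have [delta [hdelta hr]] := h eps eps_gt0; apply: le_trans hr _.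
by apply: ereal_sup_ubound; exists delta.
Qed.

Lemma upbox_ltP S r : upbox d S < r%:E ->
  exists2 eps, (0 < eps)%R &
    forall delta, (0 < delta < eps)%R -> box_ratio d S delta < r%:E.
Proof.
move/ereal_inf_lt => [_ [eps /= eps_gt0 <-] hr]; exists eps => // delta hdelta.
by apply: le_lt_trans hr; apply: ereal_sup_ubound; exists delta.
Qed.

Lemma upbox_le S r eps : (0 < eps)%R ->
  (forall delta, (0 < delta < eps)%R -> box_ratio d S delta <= r%:E) ->
  upbox d S <= r%:E.
Proof.
move=> eps_gt0 h; apply: le_trans (ereal_inf_lbound _) _; first by exists eps.
by apply/ereal_supP => _ [delta hdelta <-]; apply: h.
Qed.

Lemma small_log_scale (c : R) : exists2 eps, (0 < eps)%R &
  forall delta, (0 < delta < eps)%R -> (c <= - ln delta)%R.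
Proof.
exists (expR (- c)); first exact: expR_gt0.
move=> delta /andP[delta_gt0 delta_lt].
suff : (ln delta < - c)%R by lra.
by rewrite -[X in (_ < X)%R]expRK ltr_ln ?posrE ?expR_gt0.
Qed.

Lemma slack_scale s s' : (s < s')%R -> exists2 eps : R, (0 < eps)%R &
  forall delta, (0 < delta < eps)%R ->
    (Num.max s' 0 * ln 2 <= (s' - s) * - ln delta)%R.
Proof.
move=> ss'; have [eps eps_gt0 h] := small_log_scale (Num.max s' 0 * ln 2 / (s' - s))%R.
exists eps => // delta /h; rewrite ler_pdivrMr ?subr_gt0 //.
by rewrite [X in (_ <= X)%R -> _]mulrC.
Qed.

Lemma upbox_setU S1 S2 (c : \bar R) :
  upbox d S1 <= c -> upbox d S2 <= c -> upbox d (S1 `|` S2) <= c.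
Proof.
move=> u1 u2; apply: lee_real_ubounds => r hr.
have [r0 [cr0 r0r]] := ereal_lt_real_between hr.
have [e1 e1_gt0 h1] := upbox_ltP (le_lt_trans u1 cr0).
have [e2 e2_gt0 h2] := upbox_ltP (le_lt_trans u2 cr0).
have [e3 e3_gt0 h3] := small_log_scale (ln 2 / (r - r0)).
apply: (upbox_le (eps := Num.min (Num.min e1 e2) (Num.min e3 1)%R)).
  by rewrite !lt_min e1_gt0 e2_gt0 e3_gt0 ltr01.
move=> delta /andP[delta_gt0]; rewrite !lt_min => /andP[/andP[de1 de2] /andP[de3 de4]].
have delta01 : (0 < delta < 1)%R by rewrite delta_gt0 de4.
have := h1 delta; have := h2 delta.
rewrite delta_gt0 de1 de2 !box_ratio_lt // => /(_ isT) N2 /(_ isT) N1.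
apply: ltW; rewrite box_ratio_lt //; apply: le_lt_trans (Ncov_setU _ _ _ _) _.
have two_le : (2 <= expR ((r - r0) * - ln delta))%R.
  rewrite -[X in (X <= _)%R]lnK ?posrE // ler_expR mulrC -ler_pdivrMr; last by lra.
  by apply: h3; rewrite delta_gt0.
have -> : (r * - ln delta = (r - r0) * - ln delta + r0 * - ln delta)%R by ring.
rewrite expRD; apply: (lt_le_trans (lteD N1 N2)); rewrite -EFinD lee_fin.
have := expR_gt0 (r0 * - ln delta); nra.
Qed.

End BoxDimension.

Section ProductBox.
Variables (R : realType) (X Y : Type) (dX : metric R X) (dY : metric R Y).
Let P := prod_metric dX dY.
Variables (G : set (X * Y)) (B : set X) (t eta : R).
Hypothesis eta_gt0 : (0 < eta)%R.
Hypothesis fiber_large : forall x, B x -> forall delta, (0 < delta < eta)%R ->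
  (expR (t * - ln delta))%:E <= Ncov dY delta (section G x).

(* Passing from scale [2 delta] to [delta] costs the factor [2 ^ s'], which is
   absorbed by the slack [s' - s] once [- ln delta] is large. *)
Lemma box_ratio_prod_ge s s' delta : (0 < delta)%R -> (delta < eta)%R ->
  (delta < 1 / 2)%R -> (Num.max s' 0 * ln 2 <= (s' - s) * - ln delta)%R ->
  s'%:E <= box_ratio dX B (2 * delta) -> (s + t)%:E <= box_ratio P G delta.
Proof.
move=> delta_gt0 delta_eta delta_half slack hB.
rewrite box_ratio_ge; last by rewrite delta_gt0 /=; lra.
rewrite box_ratio_ge in hB; last by apply/andP; split; lra.
have fibers x : B x -> (expR (t * - ln delta))%:E <= Ncov dY delta (section G x).
  by move=> Bx; apply: fiber_large => //; rewrite delta_gt0.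
apply: le_trans (Ncov_fiber_bound dX (expR_gt0 _) fibers).
apply: le_trans (lee_wpmul2r _ hB); last by rewrite lee_fin expR_ge0.
rewrite -EFinM lee_fin -expRD ler_expR lnM ?posrE //.
have ln2_ge0 : (0 <= ln (2 : R))%R by apply: ln_ge0; lra.
have : (s' * ln 2 <= Num.max s' 0 * ln 2)%R by rewrite ler_wpM2r // le_max lexx.
move: slack; set L := ln delta; set l := ln 2; nra.
Qed.

Lemma lowbox_prod_ge s : s%:E < lowbox dX B -> (s + t)%:E <= lowbox P G.
Proof.
move=> hs; have [s' [ss' hs']] := ereal_gt_real_between hs.
have [e1 e1_gt0 h1] := lowbox_gtP hs'.
have [e2 e2_gt0 h2] := slack_scale ss'.
apply: (lowbox_ge (eps := Num.min (Num.min eta (1 / 2)) (Num.min (e1 / 2) e2))%R).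
  by rewrite !lt_min eta_gt0 e2_gt0 /=; apply/andP; split; lra.
move=> delta /andP[delta_gt0]; rewrite !lt_min => /andP[/andP[de dh] /andP[d1 d2]].
apply: (box_ratio_prod_ge (s' := s')) => //; first by apply: h2; rewrite delta_gt0.
by apply: ltW; apply: h1; apply/andP; split; lra.
Qed.

Lemma upbox_prod_ge s : s%:E < upbox dX B -> (s + t)%:E <= upbox P G.
Proof.
move=> hs; have [s' [ss' hs']] := ereal_gt_real_between hs.
have [e2 e2_gt0 h2] := slack_scale ss'.
apply: upbox_ge => eps eps_gt0.
set e := (Num.min (Num.min eta (1 / 2)) (Num.min eps e2))%R.
have e_gt0 : (0 < e)%R by rewrite !lt_min eta_gt0 e2_gt0 eps_gt0 /=; lra.
have [delta' [/andP[d'_gt0 d'e] hB]] := upbox_gtP hs' (eps := (2 * e)%R) ltac:(lra).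
exists (delta' / 2)%R; move: d'e; rewrite -ltr_pdivrMl // => d'e.
have := d'e; rewrite /e !lt_min => /andP[/andP[de dh] /andP[d1 d2]].
split; first by apply/andP; split; lra.
apply: (box_ratio_prod_ge (s' := s')); [lra | lra | lra | | ].
  by apply: h2; apply/andP; split; lra.
by apply: ltW; rewrite mulrC divfK.
Qed.

End ProductBox.

Lemma nondecreasing_subset (T : Type) (F : nat -> set T) :
  (forall n, F n `<=` F n.+1) -> forall n k, (n <= k)%N -> F n `<=` F k.
Proof.
move=> FS n k; elim: k => [|k IH]; first by rewrite leqn0 => /eqP ->.
by rewrite leq_eqVlt => /orP[/eqP -> //|/IH nk]; apply: subset_trans nk (FS k).
Qed.

Lemma section_subset (X Y : Type) (G G' : set (X * Y)) x :
  G `<=` G' -> section G x `<=` section G' x.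
Proof. by move=> GG' y; apply: GG'. Qed.

Section PackingDimension.
Variables (R : realType) (T : Type) (d : metric R T).

Lemma vdimP_lt_lowbox (F : nat -> set T) (S : set T) r :
  (forall n, F n `<=` F n.+1) -> \bigcup_n F n = S ->
  r%:E < vdimP d S -> exists n, r%:E < lowbox d (F n).
Proof.
move=> FS FU hr.
have : vdimP d S <= ereal_sup (range (fun n => lowbox d (F n))).
  by apply: ereal_inf_lbound; exists F.
by move/(lt_le_trans hr)/ereal_sup_gt => [_ [n _ <-]]; exists n.
Qed.

Lemma ldimP_lt_lowbox (F : nat -> set T) (S : set T) r :
  S `<=` \bigcup_n F n -> r%:E < ldimP d S -> exists n, r%:E < lowbox d (F n).
Proof.
move=> SF hr.
have : ldimP d S <= ereal_sup (range (fun n => lowbox d (F n))).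
  by apply: ereal_inf_lbound; exists F.
by move/(lt_le_trans hr)/ereal_sup_gt => [_ [n _ <-]]; exists n.
Qed.

Lemma dimP_lt_upbox (F : nat -> set T) (S : set T) r :
  S `<=` \bigcup_n F n -> r%:E < dimP d S -> exists n, r%:E < upbox d (F n).
Proof.
move=> SF hr.
have : dimP d S <= ereal_sup (range (fun n => upbox d (F n))).
  by apply: ereal_inf_lbound; exists F.
by move/(lt_le_trans hr)/ereal_sup_gt => [_ [n _ <-]]; exists n.
Qed.

Lemma upbox_bigcup_ord_le (F : nat -> set T) (c : \bar R) k :
  (forall i, upbox d (F i) <= c) -> upbox d (\bigcup_(i < k.+1) F i) <= c.
Proof.
move=> Fc; elim: k => [|k IH]; first by rewrite bigcup_mkord big_ord1.
by rewrite bigcup_mkord big_ord_recr /= -bigcup_mkord; apply: upbox_setU.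
Qed.

End PackingDimension.

Section ProductDimension.
Variables (R : realType) (X Y : Type) (dX : metric R X) (dY : metric R Y).
Let P := prod_metric dX dY.
Variable A : set X.

Definition thick_base (t : R) (G : set (X * Y)) (k : nat) : set X :=
  [set x | A x /\ forall delta, (0 < delta < k.+1%:R^-1)%R ->
    (expR (t * - ln delta))%:E <= Ncov dY delta (section G x)].

Lemma thick_base_subset t G G' k k' : G `<=` G' -> (k <= k')%N ->
  thick_base t G k `<=` thick_base t G' k'.
Proof.
move=> GG' kk' x [Ax h]; split => // delta /andP[delta_gt0 delta_lt].
apply: le_trans _ (le_Ncov _ _ (section_subset GG')); apply: h.


rewrite delta_gt0 (lt_le_trans delta_lt) //.
by rewrite lef_pV2 ?posrE ?ltr0Sn // ler_nat ltnS.
Qed.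

Lemma thick_base_witness t t' (G : nat -> set (X * Y)) x n :
  (forall n, G n `<=` G n.+1) -> A x -> (t < t')%R ->
  t'%:E < lowbox dY (section (G n) x) -> exists k, thick_base t (G k) k x.
Proof.
move=> GS Ax tt' /lowbox_gtP [eps eps_gt0 h].
have [k [nk keps]] : exists k, (n <= k)%N /\ (k.+1%:R^-1 < Num.min eps 1%R)%R.
  exists (maxn n (Num.truncn (Num.min eps 1%R)^-1)); split; first exact: leq_maxl.
  rewrite invf_plt ?posrE ?ltr0Sn ?lt_min ?eps_gt0 ?ltr01 //.
  by apply: lt_le_trans (truncnS_gt _) _; rewrite ler_nat ltnS leq_maxr.
exists k;
 split => // delta /andP[delta_gt0 delta_lt].
have := lt_trans delta_lt keps; rewrite lt_min => /andP[delta_eps delta1].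
apply: le_trans _ (le_Ncov _ _ (section_subset (nondecreasing_subset GS nk))).

rewrite -box_ratio_ge ?delta_gt0 //; apply: ltW; apply: le_lt_trans (h delta _).
  by rewrite lee_fin ltW.
by rewrite delta_gt0.
Qed.

Lemma lowbox_thick_base t G k s :
  s%:E < lowbox dX (thick_base t G k) -> (s + t)%:E <= lowbox P G.
Proof.
by apply: (lowbox_prod_ge (eta := k.+1%:R^-1)); [rewrite invr_gt0 ltr0Sn | move=> x []].
Qed.

Lemma upbox_thick_base t G k s :
  s%:E < upbox dX (thick_base t G k) -> (s + t)%:E <= upbox P G.
Proof.
by apply: (upbox_prod_ge (eta := k.+1%:R^-1)); [rewrite invr_gt0 ltr0Sn | move=> x []].
Qed.


Variable E : set (X * Y).

Lemma thick_base_cover t t' (F : nat -> set (X * Y)) :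
  (forall n, F n `<=` F n.+1) -> (t < t')%R ->
  (forall x, A x -> exists n, t'%:E < lowbox dY (section (F n) x)) ->
  A = \bigcup_k thick_base t (F k) k.
Proof.
move=> FS tt' hA; apply/seteqP; split => [x Ax|x [k _ []] //].
by have [n /(thick_base_witness FS Ax tt') [k]] := hA x Ax; exists k.
Qed.

Lemma vdimP_prod_ge :
  vdimP dX A + ereal_inf [set vdimP dY (section E x) | x in A] <= vdimP P E.
Proof.
apply/ereal_infP => _ [F [FS FE] <-]; apply: leeD_real_lbounds => s t hs ht.
have [t' [tt' ht']] := ereal_gt_real_between ht.
have AB : A = \bigcup_k thick_base t (F k) k.
  apply: (thick_base_cover FS tt') => x Ax.
  apply: (vdimP_lt_lowbox (S := section E x)) => [n y||].
  - exact: FS.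

  - by rewrite -FE; apply/seteqP; split=> y [n _ Fny]; exists n.
  - by apply: lt_le_trans ht' _; apply: ereal_inf_lbound; exists x.
have [k hk] := vdimP_lt_lowbox (fun k => thick_base_subset (FS k) (leqnSn k))
  (esym AB) hs.
apply: le_trans (lowbox_thick_base hk) _.
by apply: ereal_sup_ubound; exists k.
Qed.

Lemma ldimP_prod_ge :
  ldimP dX A + ereal_inf [set ldimP dY (section E x) | x in A] <= ldimP P E.
Proof.
apply/ereal_infP => _ [F EF <-]; apply: leeD_real_lbounds => s t hs ht.
have [t' [tt' ht']] := ereal_gt_real_between ht.
pose index j := odflt (0, 0)%N (unpickle j).
pose B j := thick_base t (F (index j).1) (index j).2.
have AB : A `<=` \bigcup_j B j.
  move=> x Ax; have [n hn] : exists n, t'%:E < lowbox dY (section (F n) x).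
    apply: (@ldimP_lt_lowbox _ _ _ (fun n => section (F n) x) (section E x)).
      by move=> y /EF [n _ Fny]; exists n.
    by apply: lt_le_trans ht' _; apply: ereal_inf_lbound; exists x.
  have [k hk] := @thick_base_witness t t' (fun _ => F n) x n
    (fun _ => @subset_refl _ (F n)) Ax tt' hn.
  by exists (pickle (n, k)); rewrite // /B /index pickleK.
have [j hj] := ldimP_lt_lowbox AB hs.
apply: le_trans (lowbox_thick_base hj) _.
by apply: ereal_sup_ubound; exists (index j).1.
Qed.

Lemma dimP_prod_ge :
  dimP dX A + ereal_inf [set vdimP dY (section E x) | x in A] <= dimP P E.
Proof.
apply/ereal_infP => _ [F EF <-]; apply: leeD_real_lbounds => s t hs ht.
have [t' [tt' ht']] := ereal_gt_real_between ht.
pose G k := \bigcup_(i < k.+1) F i.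
have GS k : G k `&` E `<=` G k.+1 `&` E.
  by move=> p [[i /= ik Fip] Ep]; split => //; exists i => //=; rewrite ltnW.
have AB : A `<=` \bigcup_k thick_base t (G k) k.
  rewrite (thick_base_cover GS tt') => [x [k _ hk]|x Ax].
    by exists k => //; apply: thick_base_subset hk => //; apply: subIsetl.
  apply: (vdimP_lt_lowbox (S := section E x)) => [n y||].
  - exact: GS.
  - apply/seteqP; split => y; first by case=> n _ [].
    by move=> /[dup] /EF [n _ Fny] Ey; exists n => //; split => //; exists n => /=.
  - by apply: lt_le_trans ht' _; apply: ereal_inf_lbound; exists x.
have [k hk] := dimP_lt_upbox AB hs.
apply: le_trans (upbox_thick_base hk) _; apply: upbox_bigcup_ord_le => i.
by apply: ereal_sup_ubound; exists i.
Qed.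

End ProductDimension.

Unset Implicit Arguments. Set Strict Implicit.

Theorem theorem4p4 (R : realType) (X Y : Type) (dX : metric R X) (dY : metric R Y)
  (E : set (X * Y)) (A : set X)
  (hA : forall x, A x -> section E x !=set0) :
  [/\ dimP (prod_metric dX dY) E >=
        dimP dX A + ereal_inf [set vdimP dY (section E x) | x in A],
      ldimP (prod_metric dX dY) E >=
        ldimP dX A + ereal_inf [set ldimP dY (section E x) | x in A] &
      vdimP (prod_metric dX dY) E >=
        vdimP dX A + ereal_inf [set vdimP dY (section E x) | x in A]].
Proof.
by split; [apply: dimP_prod_ge | apply: ldimP_prod_ge | apply: vdimP_prod_ge].
Qed.
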